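(* Let $\gamma>1$. Consider states $(\rho,\rho v,\rho e)$ with $\rho>0$, $v=\rho v/\rho$, $p=(\gamma-1)\rho e$, together with a time-independent gravity potential value $\phi_i$ attached to each cell $i$ (treated as an extra state component). Consider the semi-discretization of $\partial_t\rho+\partial_x(\rho v)=0$, $\partial_t(\rho v)+\partial_x(\rho v^2+p)=-\rho\partial_x\phi$, $\partial_t(\rho e)+\partial_x(\rho ev+pv)-v\partial_xp=0$: $$\partial_t\rho_i+\frac{f^\rho_{i+1/2}-f^\rho_{i-1/2}}{\Delta x}=0,$$ $$\partial_t(\rho v)_i+\frac{f^{\rho v}_{i+1/2}-f^{\rho v}_{i-1/2}}{\Delta x}+\frac{\rho^{\mathrm{num}}_{i+1/2}[\![\phi]\!]_{i+1/2}+\rho^{\mathrm{num}}_{i-1/2}[\![\phi]\!]_{i-1/2}}{2\Delta x}=0,$$ $$\partial_t(\rho e)_i+\frac{f^{\rho e}_{i+1/2}-f^{\rho e}_{i-1/2}}{\Delta x}-\frac{v^{\mathrm{num}}_{i+1/2}[\![p]\!]_{i+1/2}+v^{\mathrm{num}}_{i-1/2}[\![p]\!]_{i-1/2}}{2\Delta x}=0,$$ with consistent two-point fluxes $f^\rho,f^{\rho v},f^{\rho e},\rho^{\mathrm{num}},v^{\mathrm{num}}$ (consistent with $\rho v$, $\rho v^2+p$, $\rho ev+pv$, $\rho$, $v$ respectively). If the fluxes satisfy the kinetic-energy-preserving conditions $$f^{\rho v}=\{\{v\}\}f^\rho+\{\{p\}\},\qquad f^\rho=\rho^{\mathrm{num}}\{\{v\}\},\qquad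 v^{\mathrm{num}}=\{\{v\}\},$$ (with the same $\rho^{\mathrm{num}}$ as in the gravity term), then the semi-discretization conserves the total energy $U=\rho e+\tfrac12\rho v^2+\rho\phi$, i.e., it is entropy-conservative for the pair $(U,F)$ with $F=(U+p)v$.
   Context: $\{\{a\}\}=\tfrac12(a_-+a_+)$, $[\![a]\!]=a_+-a_-$; subscript $i+1/2$ means evaluation at $(u_-,u_+)=(u_i,u_{i+1})$. The ''entropy variables'' of $U$ with respect to $(\rho,\rho v,\rho e)$ are $\omega=(-\tfrac12v^2+\phi,\ v,\ 1)$. Entropy-conservative for $(U,F)$ means: there exists a two-point $F^{\mathrm{num}}$ with $F^{\mathrm{num}}(u,u)=F(u)$ such that for all grid states and all $i$, $\omega(u_i)\cdot\partial_tu_i=-\frac{1}{\Delta x}(F^{\mathrm{num}}(u_i,u_{i+1})-F^{\mathrm{num}}(u_{i-1},u_i))$. *)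

From Stdlib Require Import Reals ZArith.
Open Scope R_scope.

(* A cell state (rho, rho v, rho e) together with the (time-independent)
   gravity potential value phi, treated as an extra state component. *)
Record state := mkState { rho : R; mom : R; ener : R; phi : R }.

Definition vel (u : state) : R := mom u / rho u.
Definition pres (gamma : R) (u : state) : R := (gamma - 1) * ener u.

Definition avg (a : state -> R) (um up : state) : R := (a um + a up) / 2.
Definition jump (a : state -> R) (um up : state) : R := a up - a um.

Definition Utot (u : state) : R :=
  ener u + / 2 * rho u * vel u ^ 2 + rho u * phi u.
Definition Fflux (gamma : R) (u : state) : R :=
  (Utot u + pres gamma u) * vel u.

(* entropy variables of U w.r.t. (rho, rho v, rho e) *)
Definition omega (u : state) : R * R * R :=
  (- / 2 * vel u ^ 2 + phi u, vel u, 1).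

Definition dot3 (a b : R * R * R) : R :=
  let '(a1, a2, a3) := a in let '(b1, b2, b3) := b in a1 * b1 + a2 * b2 + a3 * b3.

Definition two_point := state -> state -> R.

Definition semidisc (gamma : R) (frho fmom fener rhonum vnum : two_point)
  (dx : R) (u : Z -> state) (i : Z) : R * R * R :=
  let um := u (i - 1)%Z in let ui := u i in let up := u (i + 1)%Z in
  ( - (frho ui up - frho um ui) / dx,
    - (fmom ui up - fmom um ui) / dx
      - (rhonum ui up * jump phi ui up + rhonum um ui * jump phi um ui) / (2 * dx),
    - (fener ui up - fener um ui) / dx
      + (vnum ui up * jump (pres gamma) ui up + vnum um ui * jump (pres gamma) um ui)
          / (2 * dx) ).

Definition entropy_conservative (w : state -> R * R * R) (F : state -> R)
  (scheme : R -> (Z -> state) -> Z -> R * R * R) : Prop :=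
  exists Fnum : two_point,
    (forall u, 0 < rho u -> Fnum u u = F u) /\
    (forall (dx : R) (u : Z -> state), 0 < dx -> (forall j, 0 < rho (u j)) ->
       forall i : Z,
         dot3 (w (u i)) (scheme dx u i) =
         - (Fnum (u i) (u (i + 1)%Z) - Fnum (u (i - 1)%Z) (u i)) / dx).

(* Contracting the scheme with the entropy variables, the mass and momentum
   equations give the change of kinetic and potential energy and the last
   equation that of internal energy.  Under the kinetic-energy-preserving
   conditions each interface contribution becomes a pure flux difference:
   the identity {{v}}^2 - v_- v_+ = [[v]]^2/4 absorbs the pressure-work terms,
   and the gravity source combines with the mass flux into
   rho^num (phi_- v_+ + v_- phi_+) / 2.  The resulting interface quantity is
   [energy_flux], which reduces to (U + p) v on constant states since
   rho v = rho * v there. *)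
From Stdlib Require Import Reals ZArith Lra.
Open Scope R_scope.

Section EnergyConservation.

Variables (gamma : R) (frho fmom fener rhonum vnum : two_point).

Definition energy_flux (um up : state) : R :=
  fener um up + frho um up * vel um * vel up / 2
  - jump vel um up * jump (pres gamma) um up / 4
  + rhonum um up * (phi um * vel up + vel um * phi up) / 2.

Definition kinetic_energy_preserving (um up : state) : Prop :=
  fmom um up = avg vel um up * frho um up + avg (pres gamma) um up /\
  frho um up = rhonum um up * avg vel um up /\
  vnum um up = avg vel um up.

Lemma mom_eq_rho_vel (u : state) : rho u <> 0 -> mom u = rho u * vel u.
Proof. intros Hr; unfold vel; field; exact Hr. Qed.

Lemma energy_flux_consistent (u : state) :
  rho u <> 0 ->
  frho u u = mom u ->
  fener u u = ener u * vel u + pres gamma u * vel u ->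
  rhonum u u = rho u ->
  energy_flux u u = Fflux gamma u.
Proof.
  intros Hr Hfrho Hfener Hrhonum.
  unfold energy_flux, Fflux, Utot, jump.
  rewrite Hfrho, Hfener, Hrhonum, (mom_eq_rho_vel u Hr).
  field.
Qed.

Lemma semidisc_energy_balance (dx : R) (u : Z -> state) (i : Z) :
  dx <> 0 ->
  kinetic_energy_preserving (u (i - 1)%Z) (u i) ->
  kinetic_energy_preserving (u i) (u (i + 1)%Z) ->
  dot3 (omega (u i)) (semidisc gamma frho fmom fener rhonum vnum dx u i) =
  - (energy_flux (u i) (u (i + 1)%Z) - energy_flux (u (i - 1)%Z) (u i)) / dx.
Proof.
  intros Hdx (Hmom_l & Hrho_l & Hv_l) (Hmom_r & Hrho_r & Hv_r).
  unfold dot3, omega, semidisc, energy_flux.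
  rewrite Hmom_l, Hmom_r, Hv_l, Hv_r, Hrho_l, Hrho_r.
  unfold avg, jump.
  field; exact Hdx.
Qed.

End EnergyConservation.

Theorem mainTheorem11 (gamma : R) (frho fmom fener rhonum vnum : two_point) :
  1 < gamma ->
  (forall u, 0 < rho u ->
     frho u u = mom u /\
     fmom u u = rho u * vel u ^ 2 + pres gamma u /\
     fener u u = ener u * vel u + pres gamma u * vel u /\
     rhonum u u = rho u /\
     vnum u u = vel u) ->
  (forall um up, 0 < rho um -> 0 < rho up ->
     fmom um up = avg vel um up * frho um up + avg (pres gamma) um up /\
     frho um up = rhonum um up * avg vel um up /\
     vnum um up = avg vel um up) ->
  entropy_conservative omega (Fflux gamma)
    (semidisc gamma frho fmom fener rhonum vnum).
Proof.
  intros _ Hcons Hkep.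
  exists (energy_flux gamma frho fener rhonum).
  split.
  - intros u Hu.
    destruct (Hcons u Hu) as (Hfrho & _ & Hfener & Hrhonum & _).
    apply energy_flux_consistent; auto with real.
  - intros dx u Hdx Hpos i.
    apply semidisc_energy_balance; [lra | apply Hkep; apply Hpos ..].
Qed.
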